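(* Let $n\ge m>1$ be integers. Then $$\max\Big\{\sum_{i,j=1}^n t_it_j\,|U^\top U|_{ij}:\ t\in\mathbb{R}^n,\ \|t\|_2=1,\ U\in\mathbb{R}^{m\times n},\ UU^\top=\mathrm{I}_m\Big\}\ \le\ \frac{m}{n}\left(1+\sqrt{\frac{(n-1)(n-m)}{m}}\right),$$ with equality if and only if there exists $U\in\mathbb{R}^{m\times n}$ with $UU^\top=\mathrm{I}_m$, $(U^\top U)_{ii}=m/n$ for all $i\in\{1,\dots,n\}$, and $|U^\top U|_{ij}=\frac1n\sqrt{\frac{(n-m)m}{n-1}}$ for all $i\ne j$.
   Context: $|A|_{ij}$ denotes the absolute value of the $(i,j)$ entry of a matrix $A$. *)

From mathcomp Require Import all_boot all_order all_algebra.
Set Implicit Arguments. Unset Strict Implicit. Unset Printing Implicit Defensive.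
Import Order.TTheory GRing.Theory Num.Theory.
Local Open Scope ring_scope.

Definition norm2 (R : rcfType) (n : nat) (t : 'rV[R]_n) : R :=
  Num.sqrt (\sum_(i < n) t 0 i ^+ 2).

Definition objective (R : rcfType) (m n : nat) (t : 'rV[R]_n) (U : 'M[R]_(m, n)) : R :=
  \sum_(i < n) \sum_(j < n) t 0 i * t 0 j * `|(U^T *m U) i j|.

Definition bound (R : rcfType) (m n : nat) : R :=
  m%:R / n%:R * (1 + Num.sqrt ((n%:R - 1) * (n%:R - m%:R) / m%:R)).

From mathcomp Require Import all_boot all_order all_algebra.
From mathcomp Require Import ring lra.
Set Implicit Arguments. Unset Strict Implicit. Unset Printing Implicit Defensive.
Import Order.TTheory GRing.Theory Num.Theory.
Local Open Scope ring_scope.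

(** Put T := t t^T - I/n and A := |U^T U| - (m/n) I.  Since P := U^T U is an
    orthogonal projection of rank m (P^T = P, P^2 = P, tr P = m) and |t| = 1, the
    Frobenius products are <T, A> = objective - m/n, |T|^2 = 1 - 1/n and
    |A|^2 = m - m^2/n, so Cauchy-Schwarz gives exactly the bound.  At equality
    A = L T with L = sqrt((n-m)m/(n-1)), i.e. |P| = L t t^T + a I.  Comparing the
    diagonal of P with that of P^2 = P gives (L - L^2 - 2aL) t_i^2 = a^2 - a for
    every i, which forces L t_i^2 = L/n and hence the stated entries of P.
    Conversely, the uniform vector t_i = 1/sqrt n attains the bound for such a U. *)

Lemma sum_sqr_le0 (R : realDomainType) (T : finType) (c : T -> R) :
  \sum_i c i ^+ 2 <= 0 -> forall i, c i = 0.
Proof.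
move=> C_le0 i; apply/eqP; rewrite -sqrf_eq0; apply/eqP.
apply: (psumr_eq0P (P := predT) (fun j _ => sqr_ge0 (c j))) => //.
by apply/eqP; rewrite eq_le C_le0 sumr_ge0 // => j _; apply: sqr_ge0.
Qed.

Section CauchySchwarz.
Variables (R : rcfType) (T : finType) (c e : T -> R).
Let C := \sum_i c i ^+ 2.
Let E := \sum_i e i ^+ 2.
Let S := \sum_i c i * e i.

Lemma cauchy_schwarz_defect :
  \sum_i (Num.sqrt E * c i - Num.sqrt C * e i) ^+ 2 =
  2 * (Num.sqrt C * Num.sqrt E) * (Num.sqrt C * Num.sqrt E - S).
Proof.
have C0 : 0 <= C by apply: sumr_ge0 => i _; apply: sqr_ge0.
have E0 : 0 <= E by apply: sumr_ge0 => i _; apply: sqr_ge0.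
rewrite (eq_bigr (fun i => Num.sqrt E ^+ 2 * c i ^+ 2 + Num.sqrt C ^+ 2 * e i ^+ 2
                           - 2 * Num.sqrt C * Num.sqrt E * (c i * e i))) => [|i _]; last by ring.
rewrite sumrB big_split /= -!mulr_sumr -/C -/E -/S !sqr_sqrtr //.
move: (sqr_sqrtr C0) (sqr_sqrtr E0); move: (Num.sqrt C) (Num.sqrt E) => a b <- <-; ring.
Qed.

Lemma cauchy_schwarz : S <= Num.sqrt C * Num.sqrt E.
Proof.
have := cauchy_schwarz_defect.
have [ab0|] := eqVneq (Num.sqrt C * Num.sqrt E) 0.
  move=> _; rewrite ab0 /S big1 // => i _.
  move/eqP: ab0; rewrite mulf_eq0 => /orP[]; rewrite sqrtr_eq0 => /sum_sqr_le0 ->.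
    by rewrite mul0r.
  by rewrite mulr0.
move=> ab_neq0 defect.
have ab_gt0 : 0 < Num.sqrt C * Num.sqrt E by rewrite lt_def ab_neq0 mulr_ge0 ?sqrtr_ge0.
have : 0 <= 2 * (Num.sqrt C * Num.sqrt E) * (Num.sqrt C * Num.sqrt E - S).
  by rewrite -defect sumr_ge0 // => i _; apply: sqr_ge0.
by rewrite pmulr_rge0 ?subr_ge0 // mulr_gt0.
Qed.

Lemma cauchy_schwarz_eq : 0 < C -> S = Num.sqrt C * Num.sqrt E ->
  forall i, e i = Num.sqrt E / Num.sqrt C * c i.
Proof.
move=> C_gt0 S_eq i.
have := cauchy_schwarz_defect; rewrite S_eq subrr mulr0 => /eqP.
rewrite eq_le => /andP[/sum_sqr_le0 /(_ i) /eqP + _]; rewrite subr_eq0 => /eqP e_i.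
by rewrite mulrAC e_i mulrC mulrA mulVf ?mul1r // gt_eqF // sqrtr_gt0.
Qed.
End CauchySchwarz.

Section CauchySchwarz2.
Variables (R : rcfType) (I J : finType) (c e : I -> J -> R).
Let C := \sum_i \sum_j c i j ^+ 2.
Let E := \sum_i \sum_j e i j ^+ 2.
Let S := \sum_i \sum_j c i j * e i j.

Lemma cauchy_schwarz2 : S <= Num.sqrt C * Num.sqrt E.
Proof. by rewrite /S /C /E !pair_bigA; apply: cauchy_schwarz. Qed.

Lemma cauchy_schwarz2_eq : 0 < C -> S = Num.sqrt C * Num.sqrt E ->
  forall i j, e i j = Num.sqrt E / Num.sqrt C * c i j.
Proof.
rewrite /S /C /E !pair_bigA => C_gt0 S_eq i j.
exact: (cauchy_schwarz_eq C_gt0 S_eq (i, j)).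
Qed.
End CauchySchwarz2.

Lemma sum_delta (R : pzSemiRingType) (I : finType) (i : I) (F : I -> R) :
  \sum_j (i == j)%:R * F j = F i.
Proof.
rewrite (bigD1 i) //= eqxx mul1r big1 ?addr0 // => j /negPf.
by rewrite eq_sym => ->; rewrite mul0r.
Qed.

Lemma sum_delta_split (R : pzSemiRingType) (I : finType) (i : I) (F G : I -> R) :
  \sum_j (F j + (i == j)%:R * G j) = \sum_j F j + G i.
Proof. by rewrite big_split sum_delta. Qed.

Definition diag_shift (R : pzRingType) n (x : 'I_n -> 'I_n -> R) (a : R) i j :=
  x i j - (i == j)%:R * a.

Lemma sum_diag_shift_mul (R : comPzRingType) n (x y : 'I_n -> 'I_n -> R) a b :
  \sum_i \sum_j diag_shift x a i j * diag_shift y b i j =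
  \sum_i \sum_j x i j * y i j - b * \sum_i x i i - a * \sum_i y i i + n%:R * (a * b).
Proof.
transitivity (\sum_i (\sum_j x i j * y i j + (a * b - b * x i i - a * y i i))).
  apply: eq_bigr => i _.
  rewrite -(sum_delta_split i _ (fun k => a * b - b * x k k - a * y k k)).
  apply: eq_bigr => j _.
  by rewrite /diag_shift; case: eqVneq => [<-|_]; rewrite /= ?mul1r ?mul0r; ring.
by rewrite big_split /= !sumrB -!mulr_sumr sumr_const card_ord; ring.
Qed.

Lemma sum_diag_shift_sqr (R : comPzRingType) n (x : 'I_n -> 'I_n -> R) a :
  \sum_i \sum_j diag_shift x a i j ^+ 2 =
  \sum_i \sum_j x i j ^+ 2 - 2 * a * \sum_i x i i + n%:R * a ^+ 2.
Proof.
under eq_bigr do under eq_bigr do rewrite expr2.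
rewrite sum_diag_shift_mul.
under eq_bigr do under eq_bigr do rewrite -expr2.
ring.
Qed.

Section GramProjection.
Variables (R : rcfType) (m n : nat) (U : 'M[R]_(m, n)).
Hypothesis hU : U *m U^T = 1%:M.
Local Notation P := (U^T *m U).

Lemma gram_sym i j : P i j = P j i.
Proof. by rewrite !mxE; apply: eq_bigr => k _; rewrite !mxE mulrC. Qed.

Lemma gram_diag_ge0 i : 0 <= P i i.
Proof. by rewrite mxE; apply: sumr_ge0 => k _; rewrite !mxE -expr2 sqr_ge0. Qed.

Lemma gram_row_sqr i : \sum_j P i j ^+ 2 = P i i.
Proof.
have : (P *m P) i i = P i i by rewrite mulmxA -(mulmxA U^T) hU mulmx1.
by rewrite mxE => <-; apply: eq_bigr => j _; rewrite expr2 (gram_sym j i).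
Qed.

Lemma gram_trace : \sum_i P i i = m%:R.
Proof. by rewrite -[LHS]/(\tr P) mxtrace_mulC hU mxtrace1. Qed.

Lemma gram_sum_sqr : \sum_i \sum_j P i j ^+ 2 = m%:R.
Proof. by rewrite -gram_trace; apply: eq_bigr => i _; rewrite gram_row_sqr. Qed.

Lemma sum_abs_gram_diag : \sum_i `|P i i| = m%:R.
Proof. by rewrite -gram_trace; apply: eq_bigr => i _; rewrite ger0_norm ?gram_diag_ge0. Qed.
End GramProjection.

Section CenteredSums.
Variables (R : rcfType) (m n : nat) (t : 'rV[R]_n) (U : 'M[R]_(m, n)).
Hypotheses (n_neq0 : n%:R != 0 :> R) (ht : \sum_i t 0 i ^+ 2 = 1) (hU : U *m U^T = 1%:M).

Definition outer_dev := diag_shift (fun i j => t 0 i * t 0 j) n%:R^-1.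
Definition gram_dev := diag_shift (fun i j => `|(U^T *m U) i j|) (m%:R / n%:R).

Let sum_weight_diag : \sum_i t 0 i * t 0 i = 1.
Proof. by rewrite -ht; apply: eq_bigr => i _; rewrite expr2. Qed.

Lemma sum_outer_dev_sqr : \sum_i \sum_j outer_dev i j ^+ 2 = 1 - n%:R^-1.
Proof.
rewrite sum_diag_shift_sqr sum_weight_diag.
have -> : \sum_i \sum_j (t 0 i * t 0 j) ^+ 2 = 1.
  rewrite -ht; apply: eq_bigr => i _.
  by rewrite -[RHS]mulr1 -ht mulr_sumr; apply: eq_bigr => j _; rewrite exprMn.
by field.
Qed.

Lemma sum_gram_dev_sqr : \sum_i \sum_j gram_dev i j ^+ 2 = m%:R - m%:R ^+ 2 / n%:R.
Proof.
rewrite sum_diag_shift_sqr sum_abs_gram_diag //.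
under eq_bigr do under eq_bigr do rewrite (real_normK (num_real _)).
by rewrite gram_sum_sqr //; field.
Qed.

Lemma sum_outer_gram_dev :
  \sum_i \sum_j outer_dev i j * gram_dev i j = objective t U - m%:R / n%:R.
Proof.
by rewrite sum_diag_shift_mul sum_weight_diag sum_abs_gram_diag // /objective; field.
Qed.
End CenteredSums.

Lemma norm2_eq1_sum (R : rcfType) n (t : 'rV[R]_n) :
  norm2 t = 1 -> \sum_i t 0 i ^+ 2 = 1.
Proof.
rewrite /norm2 => t1.
by rewrite -[LHS]sqr_sqrtr ?t1 ?expr1n // sumr_ge0 // => i _; apply: sqr_ge0.
Qed.

Lemma mulr_sqrt (R : rcfType) (a b : R) :
  0 <= a -> a * Num.sqrt b = Num.sqrt (a ^+ 2 * b).
Proof. by move=> a0; rewrite sqrtrM ?sqr_ge0 // sqrtr_sqr ger0_norm. Qed.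

Lemma boundE_cauchy_schwarz (R : rcfType) m n : (0 < m)%N -> (0 < n)%N ->
  bound R m n =
    m%:R / n%:R + Num.sqrt (1 - n%:R^-1) * Num.sqrt (m%:R - m%:R ^+ 2 / n%:R).
Proof.
move=> m_gt0 n_gt0.
have n_neq0 : n%:R != 0 :> R by rewrite pnatr_eq0 -lt0n.
have m_neq0 : m%:R != 0 :> R by rewrite pnatr_eq0 -lt0n.
have : 0 <= 1 - n%:R^-1 :> R by rewrite subr_ge0 invf_le1 ?ltr0n ?ler1n.
rewrite /bound mulrDr mulr1 => /sqrtrM <-; rewrite mulr_sqrt ?divr_ge0 //.
by congr (_ + Num.sqrt _); field; rewrite n_neq0 m_neq0.
Qed.

Lemma boundE_offdiag (R : rcfType) m n : (0 < m)%N -> (1 < n)%N ->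
  bound R m n = m%:R / n%:R +
    (n%:R - 1) * (n%:R^-1 * Num.sqrt ((n%:R - m%:R) * m%:R / (n%:R - 1))).
Proof.
move=> m_gt0 n_gt1; have n_gt0 := ltnW n_gt1.
have n_neq0 : n%:R != 0 :> R by rewrite pnatr_eq0 -lt0n.
have m_neq0 : m%:R != 0 :> R by rewrite pnatr_eq0 -lt0n.
have n1_gt0 : 0 < n%:R - 1 :> R by rewrite subr_gt0 ltr1n.
have n1_ge0 := ltW n1_gt0.
rewrite /bound mulrDr mulr1 mulrA !mulr_sqrt ?mulr_ge0 ?invr_ge0 ?divr_ge0 ?ler0n //.
by congr (_ + Num.sqrt _); field; rewrite (gt_eqF n1_gt0) n_neq0 m_neq0.
Qed.

Lemma objective_le_bound (R : rcfType) m n (t : 'rV[R]_n) (U : 'M[R]_(m, n)) :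
  (0 < m)%N -> (0 < n)%N -> \sum_i t 0 i ^+ 2 = 1 -> U *m U^T = 1%:M ->
  objective t U <= bound R m n.
Proof.
move=> m_gt0 n_gt0 ht hU.
have n_neq0 : n%:R != 0 :> R by rewrite pnatr_eq0 -lt0n.
have := cauchy_schwarz2 (outer_dev t) (gram_dev U).
rewrite sum_outer_gram_dev // sum_outer_dev_sqr // sum_gram_dev_sqr //.
by rewrite boundE_cauchy_schwarz // lerBlDl.
Qed.

Section RankOneGram.
Variables (R : rcfType) (m n : nat) (t : 'rV[R]_n) (U : 'M[R]_(m, n)) (L a : R).
Hypotheses (ht : \sum_i t 0 i ^+ 2 = 1) (hU : U *m U^T = 1%:M).
Hypothesis abs_gram : forall i j,
  `|(U^T *m U) i j| = L * (t 0 i * t 0 j) + (i == j)%:R * a.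

Lemma rank_one_gram_diag i : (U^T *m U) i i = L * t 0 i ^+ 2 + a.
Proof. by rewrite -[LHS]ger0_norm ?gram_diag_ge0 // abs_gram eqxx mul1r expr2. Qed.

Lemma rank_one_gram_trace : L + n%:R * a = m%:R.
Proof.
rewrite -(gram_trace hU) (eq_bigr _ (fun i _ => rank_one_gram_diag i)).
by rewrite big_split /= -mulr_sumr ht mulr1 sumr_const card_ord mulr_natl.
Qed.

Lemma rank_one_gram_idem i : (L - L ^+ 2 - 2 * a * L) * t 0 i ^+ 2 = a ^+ 2 - a.
Proof.
have row_sqr :
    \sum_j `|(U^T *m U) i j| ^+ 2 = (L ^+ 2 + 2 * a * L) * t 0 i ^+ 2 + a ^+ 2.
  rewrite (eq_bigr (fun j => L ^+ 2 * t 0 i ^+ 2 * t 0 j ^+ 2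
                      + (i == j)%:R * (2 * a * L * (t 0 i * t 0 j) + a ^+ 2))) => [|j _].
    by rewrite sum_delta_split -mulr_sumr ht -expr2; ring.
  by rewrite abs_gram; case: eqVneq => [<-|_]; rewrite /= ?mul1r ?mul0r; ring.
move: row_sqr; under eq_bigr do rewrite (real_normK (num_real _)).
rewrite gram_row_sqr // rank_one_gram_diag => row_sqr.
lra.
Qed.

Lemma rank_one_gram_coef : L - L ^+ 2 - 2 * a * L = n%:R * (a ^+ 2 - a).
Proof.
transitivity ((L - L ^+ 2 - 2 * a * L) * \sum_i t 0 i ^+ 2); first by rewrite ht mulr1.
rewrite mulr_sumr (eq_bigr _ (fun i _ => rank_one_gram_idem i)).
by rewrite sumr_const card_ord mulr_natl.
Qed.

Lemma rank_one_gram_uniform : (1 < m)%N -> (m <= n)%N -> 0 <= L ->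
  forall i, L * t 0 i ^+ 2 = L / n%:R.
Proof.
move=> m_gt1 le_mn L_ge0 i.
have n_neq0 : n%:R != 0 :> R by rewrite pnatr_eq0 -lt0n (leq_trans _ le_mn) // ltnW.
have [a_idem|a_nidem] := eqVneq (a ^+ 2 - a) 0; last first.
  have coef_neq0 : L - L ^+ 2 - 2 * a * L != 0 by rewrite rank_one_gram_coef mulf_neq0.
  apply: (mulfI coef_neq0); rewrite mulrCA rank_one_gram_idem rank_one_gram_coef.
  by field.
(* a = 0 forces L = m, against the coefficient identity as m > 1;
   a = 1 forces L = m - n <= 0. *)
have := rank_one_gram_trace; have := rank_one_gram_coef.
have m_gt1R : 1 < m%:R :> R by rewrite ltr1n.
have le_mnR : m%:R <= n%:R :> R by rewrite ler_nat.
have : a * (a - 1) = 0 by rewrite -a_idem; ring.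
move/eqP; rewrite mulf_eq0 subr_eq0 => /orP[] /eqP -> coef trace.
- have L_eq : L = m%:R by lra.
  by move: coef; rewrite L_eq; nra.
- have L0 : L = 0 by lra.
  by rewrite L0 !mul0r.
Qed.
End RankOneGram.

Section Extremal.
Variables (R : rcfType) (m n : nat) (t : 'rV[R]_n) (U : 'M[R]_(m, n)).
Hypotheses (m_gt1 : (1 < m)%N) (le_mn : (m <= n)%N).
Hypotheses (ht : \sum_i t 0 i ^+ 2 = 1) (hU : U *m U^T = 1%:M).
Hypothesis extremal : objective t U = bound R m n.

Let n_gt1 : (1 < n)%N := leq_trans m_gt1 le_mn.
Let n_neq0 : n%:R != 0 :> R.
Proof. by rewrite pnatr_eq0 -lt0n ltnW. Qed.
Let n1_neq0 : n%:R - 1 != 0 :> R.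
Proof. by rewrite gt_eqF // subr_gt0 ltr1n. Qed.
Let m_neq0 : m%:R != 0 :> R.
Proof. by rewrite pnatr_eq0 -lt0n ltnW. Qed.

Local Notation L := (Num.sqrt ((n%:R - m%:R) * m%:R / (n%:R - 1)) : R).

Lemma abs_gram_extremal i j :
  `|(U^T *m U) i j| = L * (t 0 i * t 0 j) + (i == j)%:R * ((m%:R - L) / n%:R).
Proof.
have outer_gt0 : 0 < \sum_i \sum_j outer_dev t i j ^+ 2.
  by rewrite sum_outer_dev_sqr // subr_gt0 invf_lt1 ?ltr0n ?ltr1n // ltnW.
have S_eq : \sum_i \sum_j outer_dev t i j * gram_dev U i j =
    Num.sqrt (\sum_i \sum_j outer_dev t i j ^+ 2) *
    Num.sqrt (\sum_i \sum_j gram_dev U i j ^+ 2).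
  rewrite (sum_outer_gram_dev n_neq0 ht hU) (sum_outer_dev_sqr n_neq0 ht).
  rewrite (sum_gram_dev_sqr n_neq0 hU) extremal.
  by rewrite (boundE_cauchy_schwarz _ (ltnW m_gt1) (ltnW n_gt1)) addrC addKr.
have := cauchy_schwarz2_eq outer_gt0 S_eq i j.
rewrite (sum_outer_dev_sqr n_neq0 ht) (sum_gram_dev_sqr n_neq0 hU).
have C_ge0 : 0 <= 1 - n%:R^-1 :> R by rewrite subr_ge0 invf_le1 ?ltr0n ?ler1n // ltnW.
have -> : Num.sqrt (m%:R - m%:R ^+ 2 / n%:R) / Num.sqrt (1 - n%:R^-1) = L.
  rewrite mulrC -(sqrtrV C_ge0) -sqrtrM; last by rewrite invr_ge0.
  by congr Num.sqrt; field; rewrite n1_neq0 n_neq0.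
rewrite /gram_dev /outer_dev /diag_shift => /eqP; rewrite subr_eq => /eqP ->.
by ring.
Qed.

Let uniform := rank_one_gram_uniform ht hU abs_gram_extremal m_gt1 le_mn (sqrtr_ge0 _).

Lemma gram_diag_extremal i : (U^T *m U) i i = m%:R / n%:R.
Proof. by rewrite (rank_one_gram_diag abs_gram_extremal) uniform; field. Qed.

Lemma abs_gram_offdiag_extremal i j : i != j -> `|(U^T *m U) i j| = n%:R^-1 * L.
Proof.
move=> neq_ij; apply/eqP.
rewrite -(eqrXn2 (n := 2)) ?mulr_ge0 ?invr_ge0 ?ler0n ?sqrtr_ge0 //.
rewrite abs_gram_extremal (negPf neq_ij) mul0r addr0; apply/eqP.
transitivity ((L * t 0 i ^+ 2) * (L * t 0 j ^+ 2)); first by ring.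
by rewrite !uniform; ring.
Qed.
End Extremal.

Definition uniform_weights (R : rcfType) n : 'rV[R]_n := const_mx (Num.sqrt n%:R^-1).

Lemma uniform_weights_mul (R : rcfType) n i j :
  uniform_weights R n 0 i * uniform_weights R n 0 j = n%:R^-1.
Proof. by rewrite !mxE -expr2 sqr_sqrtr // invr_ge0 ler0n. Qed.

Lemma norm2_uniform_weights (R : rcfType) n : (0 < n)%N -> norm2 (uniform_weights R n) = 1.
Proof.
move=> n_gt0; rewrite /norm2.
under eq_bigr do rewrite expr2 uniform_weights_mul.
by rewrite sumr_const card_ord -[X in Num.sqrt X]mulr_natr mulVf ?sqrtr1 // pnatr_eq0 -lt0n.
Qed.

Lemma objective_uniform_weights (R : rcfType) m n (U : 'M[R]_(m, n)) (w : R) :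
  (0 < n)%N ->
  (forall i, (U^T *m U) i i = m%:R / n%:R) ->
  (forall i j, i != j -> `|(U^T *m U) i j| = w) ->
  objective (uniform_weights R n) U = m%:R / n%:R + (n%:R - 1) * w.
Proof.
move=> n_gt0 diag offdiag.
have n_neq0 : n%:R != 0 :> R by rewrite pnatr_eq0 -lt0n.
have abs_gram i j : `|(U^T *m U) i j| = w + (i == j)%:R * (m%:R / n%:R - w).
  case: eqVneq => [<-|/offdiag ->]; rewrite /= ?mul1r ?mul0r ?addr0 //.
  by rewrite diag ger0_norm ?divr_ge0 ?ler0n // addrC subrK.
rewrite /objective.
under eq_bigr do under eq_bigr do rewrite uniform_weights_mul abs_gram mulrDr mulrCA.
under eq_bigr do rewrite sum_delta_split sumr_const card_ord.
by rewrite sumr_const card_ord; field.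
Qed.

Theorem proposition3 (R : rcfType) (m n : nat) (hm : (1 < m)%N) (hmn : (m <= n)%N) :
  (forall (t : 'rV[R]_n) (U : 'M[R]_(m, n)),
      norm2 t = 1 -> U *m U^T = 1%:M -> objective t U <= bound R m n)
  /\
  ((exists (t : 'rV[R]_n) (U : 'M[R]_(m, n)),
      [/\ norm2 t = 1, U *m U^T = 1%:M & objective t U = bound R m n])
   <->
   (exists U : 'M[R]_(m, n),
      [/\ U *m U^T = 1%:M,
          forall i : 'I_n, (U^T *m U) i i = m%:R / n%:R
        & forall i j : 'I_n, i != j ->
            `|(U^T *m U) i j| = n%:R^-1 * Num.sqrt ((n%:R - m%:R) * m%:R / (n%:R - 1))])).
Proof.
have n_gt1 : (1 < n)%N := leq_trans hm hmn.
have m_gt0 : (0 < m)%N := ltnW hm.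
have n_gt0 : (0 < n)%N := ltnW n_gt1.
split=> [t U /norm2_eq1_sum ht hU|]; first exact: objective_le_bound.
split=> [[t [U [/norm2_eq1_sum ht hU extremal]]] | [U [hU diag offdiag]]].
- exists U; split; first exact: hU.
  + exact: gram_diag_extremal hm hmn ht hU extremal.
  + exact: abs_gram_offdiag_extremal hm hmn ht hU extremal.
- exists (uniform_weights R n), U; split; [exact: norm2_uniform_weights | exact: hU |].
  by rewrite (objective_uniform_weights n_gt0 diag offdiag) (boundE_offdiag _ m_gt0 n_gt1).
Qed.
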